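(* For each $\Lambda\in\{\mathsf{CS4},\mathsf{GS4},\mathsf{S4I}\}$ and every formula $\varphi$: $\Lambda\vdash\varphi$ if and only if $\mathcal M\models\varphi$ for every $\Lambda$-model $\mathcal M$.
   Context: Fix a countably infinite set $\mathbb P$ of propositional variables. Formulas: $\varphi,\psi ::= p\mid\bot\mid(\varphi\wedge\psi)\mid(\varphi\vee\psi)\mid(\varphi\to\psi)\mid\Diamond\varphi\mid\Box\varphi$; $\neg\varphi:=\varphi\to\bot$. A bi-intuitionistic frame is $(W,W_\bot,\preccurlyeq,\sqsubseteq)$ with $\preccurlyeq,\sqsubseteq$ preorders on $W$ and $W_\bot\subseteq W$ upward closed under both; infallible if $W_\bot=\varnothing$. A valuation $V:\mathbb P\to 2^W$ has each $V(p)$ upward closed under $\preccurlyeq$ and containing $W_\bot$; a model is $\mathcal M=(W,W_\bot,\preccurlyeq,\sqsubseteq,V)$. Satisfaction: $p$ iff $w\in V(p)$; $\bot$ iff $w\in W_\bot$; $\wedge,\vee$ pointwise; $w\models\varphi\to\psi$ iff for all $v\succcurlyeq w$, $v\models\varphi$ implies $v\models\psi$; $w\models\Diamond\varphi$ iff for all $u\succcurlyeq w$ there is $v\sqsupseteq u$ with $v\models\varphi$; $w\models\Box\varphi$ iff $v\models\varphi$ whenever $w\preccurlyeq u\sqsubseteq v$. $\mathcal M\models\varphi$ iff $\varphi$ holds at every $w\in W\setminus W_\bot$. $\sqsubseteq$ is forward confluent if $w\preccurlyeq w'$, $w\sqsubseteq v$ imply some $v'$ with $v\preccurlyeq v'$,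 $w'\sqsubseteq v'$; backward confluent if $w\sqsubseteq v\preccurlyeq v'$ implies some $w'$ with $w\preccurlyeq w'\sqsubseteq v'$; downward confluent if $w\preccurlyeq v\sqsubseteq v'$ implies some $w'$ with $w\sqsubseteq w'\preccurlyeq v'$. Locally linear: $w\preccurlyeq u$, $w\preccurlyeq v$ imply $u\preccurlyeq v$ or $v\preccurlyeq u$. $\mathsf{CS4}$-frames: backward confluent bi-intuitionistic frames. $\mathsf{GS4}$-frames: infallible, locally linear, forward and backward confluent. $\mathsf{S4I}$-frames: infallible, forward and downward confluent. A $\Lambda$-model is a model on a $\Lambda$-frame. $\mathsf{CS4}$ is the least set of formulas containing all intuitionistic propositional tautologies and all instances of $\Box(\varphi\to\psi)\to(\Box\varphi\to\Box\psi)$, $\Box(\varphi\to\psi)\to(\Diamond\varphi\to\Diamond\psi)$, $\Box\varphi\to\varphi$, $\varphi\to\Diamond\varphi$, $\Box\varphi\to\Box\Box\varphi$, $\Diamond\Diamond\varphi\to\Diamond\varphi$, closed under modus ponens and necessitation. Axioms: (FS) $(\Diamond\varphi\to\Box\psi)\to\Box(\varphi\to\psi)$; (DP) $\Diamond(\varphi\vee\psi)\to\Diamond\varphi\vee\Diamond\psi$; (N) $\neg\Diamond\bot$; (CD) $\Box(\varphi\vee\psi)\to\Box\varphi\vee\Diamond\psi$; (GD) $(\varphi\to\psi)\vee(\psi\to\varphi)$. $\mathsf{GS4}=\mathsf{CS4}+\mathrm{FS}+\mathrm{DP}+\mathrm N+\mathrm{GD}$ and $\mathsf{S4I}=\mathsf{CS4}+\mathrm{DP}+\mathrm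 N+\mathrm{CD}$ (adding all instances, closed under the same rules). *)

Inductive form : Type :=
| Var : nat -> form
| Bot : form
| And : form -> form -> form
| Or  : form -> form -> form
| Imp : form -> form -> form
| Dia : form -> form
| Box : form -> form.

Definition Neg (p : form) : form := Imp p Bot.

Record frame : Type := {
  W     : Type;
  Wbot  : W -> Prop;
  le    : W -> W -> Prop;
  sq    : W -> W -> Prop;
  le_refl  : forall w, le w w;
  le_trans : forall u v w, le u v -> le v w -> le u w;
  sq_refl  : forall w, sq w w;
  sq_trans : forall u v w, sq u v -> sq v w -> sq u w;
  Wbot_up_le : forall w v, Wbot w -> le w v -> Wbot v;
  Wbot_up_sq : forall w v, Wbot w -> sq w v -> Wbot v
}.

Record model : Type := {
  mframe :> frame;
  val : nat -> W mframe -> Prop;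
  val_up  : forall p w v, val p w -> le mframe w v -> val p v;
  val_bot : forall p w, Wbot mframe w -> val p w
}.

Fixpoint sat (M : model) (w : W M) (f : form) : Prop :=
  match f with
  | Var p => val M p w
  | Bot => Wbot M w
  | And a b => sat M w a /\ sat M w b
  | Or a b => sat M w a \/ sat M w b
  | Imp a b => forall v, le M w v -> sat M v a -> sat M v b
  | Dia a => forall u, le M w u -> exists v, sq M u v /\ sat M v a
  | Box a => forall u v, le M w u -> sq M u v -> sat M v a
  end.

Definition valid (M : model) (f : form) : Prop :=
  forall w : W M, ~ Wbot M w -> sat M w f.

Definition infallible (F : frame) : Prop := forall w, ~ Wbot F w.

Definition forward_confluent (F : frame) : Prop :=
  forall w w' v, le F w w' -> sq F w v -> exists v', le F v v' /\ sq F w' v'.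

Definition backward_confluent (F : frame) : Prop :=
  forall w v v', sq F w v -> le F v v' -> exists w', le F w w' /\ sq F w' v'.

Definition downward_confluent (F : frame) : Prop :=
  forall w v v', le F w v -> sq F v v' -> exists w', sq F w w' /\ le F w' v'.

Definition locally_linear (F : frame) : Prop :=
  forall w u v, le F w u -> le F w v -> le F u v \/ le F v u.

Definition CS4_frame (F : frame) : Prop := backward_confluent F.

Definition GS4_frame (F : frame) : Prop :=
  infallible F /\ locally_linear F /\ forward_confluent F /\ backward_confluent F.

Definition S4I_frame (F : frame) : Prop :=
  infallible F /\ forward_confluent F /\ downward_confluent F.

(* "All intuitionistic propositional tautologies" (substitution instances in
   the modal language) are generated by the standard Hilbert axioms of IPC
   together with modus ponens. [Ax] is the set of extra axiom instances. *)
Inductive prv (Ax : form -> Prop) : form -> Prop :=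
| ax_K  : forall a b, prv Ax (Imp a (Imp b a))
| ax_S  : forall a b c,
    prv Ax (Imp (Imp a (Imp b c)) (Imp (Imp a b) (Imp a c)))
| ax_andI : forall a b, prv Ax (Imp a (Imp b (And a b)))
| ax_andE1 : forall a b, prv Ax (Imp (And a b) a)
| ax_andE2 : forall a b, prv Ax (Imp (And a b) b)
| ax_orI1 : forall a b, prv Ax (Imp a (Or a b))
| ax_orI2 : forall a b, prv Ax (Imp b (Or a b))
| ax_orE : forall a b c,
    prv Ax (Imp (Imp a c) (Imp (Imp b c) (Imp (Or a b) c)))
| ax_efq : forall a, prv Ax (Imp Bot a)
| ax_Kbox : forall a b, prv Ax (Imp (Box (Imp a b)) (Imp (Box a) (Box b)))
| ax_Kdia : forall a b, prv Ax (Imp (Box (Imp a b)) (Imp (Dia a) (Dia b)))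
| ax_Tbox : forall a, prv Ax (Imp (Box a) a)
| ax_Tdia : forall a, prv Ax (Imp a (Dia a))
| ax_4box : forall a, prv Ax (Imp (Box a) (Box (Box a)))
| ax_4dia : forall a, prv Ax (Imp (Dia (Dia a)) (Dia a))
| ax_extra : forall a, Ax a -> prv Ax a
| r_mp  : forall a b, prv Ax (Imp a b) -> prv Ax a -> prv Ax b
| r_nec : forall a, prv Ax a -> prv Ax (Box a).

Definition FS_inst (f : form) : Prop :=
  exists a b, f = Imp (Imp (Dia a) (Box b)) (Box (Imp a b)).
Definition DP_inst (f : form) : Prop :=
  exists a b, f = Imp (Dia (Or a b)) (Or (Dia a) (Dia b)).
Definition N_inst (f : form) : Prop := f = Neg (Dia Bot).
Definition CD_inst (f : form) : Prop :=
  exists a b, f = Imp (Box (Or a b)) (Or (Box a) (Dia b)).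
Definition GD_inst (f : form) : Prop :=
  exists a b, f = Or (Imp a b) (Imp b a).

Inductive logic : Type := CS4 | GS4 | S4I.

Definition extra_axioms (L : logic) : form -> Prop :=
  match L with
  | CS4 => fun _ => False
  | GS4 => fun f => FS_inst f \/ DP_inst f \/ N_inst f \/ GD_inst f
  | S4I => fun f => DP_inst f \/ N_inst f \/ CD_inst f
  end.

Definition proves (L : logic) (f : form) : Prop := prv (extra_axioms L) f.

Definition frame_class (L : logic) : frame -> Prop :=
  match L with
  | CS4 => CS4_frame
  | GS4 => GS4_frame
  | S4I => S4I_frame
  end.

(* Soundness is a routine induction on derivations: every world satisfies
   each axiom instance, the only frame-sensitive cases being the 4-axiom for
   boxes (which needs backward or downward confluence) and the extra axioms
   FS, DP, N, GD, CD (each matched by its frame condition).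

   Completeness goes through canonical models whose worlds are (built from)
   prime theories.  After the basic derivation calculus and a Lindenbaum
   lemma (a theory avoiding a set of formulas closed under disjunction
   extends to a prime theory avoiding it), a generic truth lemma reduces
   "satisfaction = membership" in any such model to the two modal clauses.
   For CS4 the worlds are prime theories, possibly containing bottom, paired
   with a set of formulas whose diamonds are forbidden; the resulting frame
   is backward confluent.  For GS4 and S4I the worlds are consistent prime
   theories, with  w ⊑ v  iff the boxes of w hold in v and the formulas of v
   have their diamonds in w; DP and N yield diamond witnesses and forward
   confluence, FS yields the box clause and backward confluence, GD local
   linearity, and CD the box clause and downward confluence. *)

From Stdlib Require Import Classical Setoid Lia Cantor.

Definition Top : form := Imp Bot Bot.

Section Soundness.
Variable M : model.

Lemma sat_persistent f : forall w v, sat M w f -> le M w v -> sat M v f.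
Proof.
  induction f; simpl; intros w v H Hv.
  - eapply val_up; eauto.
  - eapply Wbot_up_le; eauto.
  - destruct H; split; eauto.
  - destruct H; [left | right]; eauto.
  - intros v' Hv'; apply H; eapply le_trans; eauto.
  - intros u Hu; apply H; eapply le_trans; eauto.
  - intros u z Hu Hz; apply (H u z); auto; eapply le_trans; eauto.
Qed.

Local Ltac persist := eapply sat_persistent; eassumption.

Lemma sat_fallible f : forall w, Wbot M w -> sat M w f.
Proof.
  induction f; simpl; intros w H.
  - apply val_bot; auto.
  - auto.
  - split; auto.
  - left; auto.
  - intros v Hv _; apply IHf2; eapply Wbot_up_le; eauto.
  - intros u Hu; exists u; split; [apply sq_refl | apply IHf; eapply Wbot_up_le; eauto].
  - intros u v Hu Hv; apply IHf; eapply Wbot_up_sq; [eapply Wbot_up_le; eauto | eauto].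
Qed.

Lemma box4_sound_backward a w : backward_confluent M -> sat M w (Imp (Box a) (Box (Box a))).
Proof.
  intros BC; simpl; intros v _ H u z Hu Hz u' z' Hu' Hz'.
  destruct (BC _ _ _ Hz Hu') as [w' [H1 H2]].
  apply (H w' z'); [eapply le_trans; eauto | eapply sq_trans; eauto].
Qed.

Lemma box4_sound_downward a w : downward_confluent M -> sat M w (Imp (Box a) (Box (Box a))).
Proof.
  intros DC; simpl; intros v _ H u z Hu Hz u' z' Hu' Hz'.
  destruct (DC _ _ _ Hu' Hz') as [x [H1 H2]].
  eapply sat_persistent; [| exact H2]. apply (H u x); auto; eapply sq_trans; eauto.
Qed.

Lemma prv_sound (Ax : form -> Prop) :
  (forall a w, sat M w (Imp (Box a) (Box (Box a)))) ->
  (forall a, Ax a -> forall w, sat M w a) ->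
  forall f, prv Ax f -> forall w, sat M w f.
Proof.
  intros B4 HAx f D; induction D; intro w; simpl in *.
  - intros v Hv Ha v' Hv' Hb; persist.
  - intros v1 H1 Habc v2 H2 Hab v3 H3 Ha.
    apply (Habc v3 (le_trans _ _ _ _ H2 H3) Ha v3 (le_refl _ _) (Hab v3 H3 Ha)).
  - intros v1 H1 Ha v2 H2 Hb; split; [persist | auto].
  - intros v _ [H1 H2]; auto.
  - intros v _ [H1 H2]; auto.
  - intros v _ H; auto.
  - intros v _ H; auto.
  - intros v1 _ Hac v2 H2 Hbc v3 H3 [Ha | Hb].
    + apply (Hac v3 (le_trans _ _ _ _ H2 H3)); auto.
    + apply (Hbc v3 H3); auto.
  - intros v _ H; apply sat_fallible; auto.
  - intros v1 _ H1 v2 H2 H3 u z Hu Hz.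
    apply (H1 u z (le_trans _ _ _ _ H2 Hu) Hz z (le_refl _ _) (H3 u z Hu Hz)).
  - intros v1 _ H1 v2 H2 H3 u Hu. destruct (H3 u Hu) as [z [Hz Hza]].
    exists z; split; auto. apply (H1 u z (le_trans _ _ _ _ H2 Hu) Hz z (le_refl _ _) Hza).
  - intros v _ H; apply (H v v (le_refl _ _) (sq_refl _ _)).
  - intros v _ H u Hu; exists u; split; [apply sq_refl | persist].
  - apply B4.
  - intros v _ H u Hu; destruct (H u Hu) as [z [Hz Hz2]].
    destruct (Hz2 z (le_refl _ _)) as [y [Hy Hya]]; exists y; split; auto; eapply sq_trans; eauto.
  - apply HAx; auto.
  - apply (IHD1 w w (le_refl _ _) (IHD2 w)).
  - intros u v _ _; auto.
Qed.

Lemma FS_sound a b w : forward_confluent M -> backward_confluent M ->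
  sat M w (Imp (Imp (Dia a) (Box b)) (Box (Imp a b))).
Proof.
  intros FC BC; simpl; intros v _ H u z Hu Hz y Hy Ha.
  destruct (BC _ _ _ Hz Hy) as [u' [H1 H2]].
  assert (Hd : sat M u' (Dia a)).
  { simpl; intros t Ht. destruct (FC _ _ _ Ht H2) as [y' [H3 H4]].
    exists y'; split; auto; persist. }
  apply (H u' (le_trans _ _ _ _ Hu H1) Hd u' y (le_refl _ _) H2).
Qed.

Lemma DP_sound a b w : forward_confluent M -> sat M w (Imp (Dia (Or a b)) (Or (Dia a) (Dia b))).
Proof.
  intros FC; simpl; intros v _ H.
  destruct (H v (le_refl _ _)) as [z [Hz [Ha | Hb]]]; [left | right];
  intros u Hu; destruct (FC _ _ _ Hu Hz) as [z' [H1 H2]]; exists z'; split; auto; persist.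
Qed.

Lemma N_sound w : infallible M -> sat M w (Neg (Dia Bot)).
Proof.
  intros IF; simpl; intros v _ H.
  destruct (H v (le_refl _ _)) as [z [_ Hz]]. exfalso; exact (IF z Hz).
Qed.

Lemma GD_sound a b w : locally_linear M -> sat M w (Or (Imp a b) (Imp b a)).
Proof.
  intros LL. destruct (classic (sat M w (Imp a b))) as [H | H]; [left; auto | right].
  simpl in *. apply not_all_ex_not in H as [v H].
  apply imply_to_and in H as [Hv H]. apply imply_to_and in H as [Ha Hb].
  intros v' Hv' Hb'. destruct (LL _ _ _ Hv Hv') as [H1 | H1].
  - persist.
  - exfalso; apply Hb; persist.
Qed.

Lemma CD_sound a b w : forward_confluent M -> downward_confluent M ->
  sat M w (Imp (Box (Or a b)) (Or (Box a) (Dia b))).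
Proof.
  intros FC DC; simpl; intros v _ H.
  destruct (classic (exists z, sq M v z /\ sat M z b)) as [[z [Hz Hb]] | Hno].
  - right; intros u Hu; destruct (FC _ _ _ Hu Hz) as [z' [H1 H2]].
    exists z'; split; auto; persist.
  - left; intros u x Hu Hx. destruct (DC _ _ _ Hu Hx) as [v' [H1 H2]].
    destruct (H v v' (le_refl _ _) H1) as [Ha | Hb].
    + persist.
    + exfalso; apply Hno; eauto.
Qed.

End Soundness.

Lemma proves_sound (L : logic) (M : model) f :
  frame_class L M -> proves L f -> forall w, sat M w f.
Proof.
  intros FC D. apply (prv_sound M (extra_axioms L)); auto.
  - intros a w. destruct L; simpl in FC.
    + apply box4_sound_backward; auto.
    + apply box4_sound_backward; apply FC.
    + apply box4_sound_downward; apply FC.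
  - destruct L; simpl in *; intros a Ha w; unfold N_inst in Ha.
    + contradiction.
    + destruct FC as [I [LL [F B]]].
      destruct Ha as [[x [y E]] | [[x [y E]] | [E | [x [y E]]]]]; subst.
      * apply FS_sound; auto.
      * apply DP_sound; auto.
      * apply N_sound; auto.
      * apply GD_sound; auto.
    + destruct FC as [I [F Dn]].
      destruct Ha as [[x [y E]] | [E | [x [y E]]]]; subst.
      * apply DP_sound; auto.
      * apply N_sound; auto.
      * apply CD_sound; auto.
Qed.

(* Injective coding of formulas by natural numbers, used to enumerate all
   formulas in the Lindenbaum construction. *)
Fixpoint code (f : form) : nat :=
  match f with
  | Var p => to_nat (0, p)
  | Bot => to_nat (1, 0)
  | And a b => to_nat (2, to_nat (code a, code b))
  | Or a b => to_nat (3, to_nat (code a, code b))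
  | Imp a b => to_nat (4, to_nat (code a, code b))
  | Dia a => to_nat (5, code a)
  | Box a => to_nat (6, code a)
  end.

Lemma to_nat_inj p q : to_nat p = to_nat q -> p = q.
Proof. intro H; rewrite <- (cancel_of_to p), <- (cancel_of_to q), H; reflexivity. Qed.

Lemma pair_inj (a b c d : nat) : (a, b) = (c, d) -> a = c /\ b = d.
Proof. intro H; inversion H; auto. Qed.

Lemma code_inj f g : code f = code g -> f = g.
Proof.
  revert g; induction f; destruct g; cbn [code]; intro H;
    apply to_nat_inj, pair_inj in H; destruct H as [H1 H2]; try discriminate; try reflexivity.
  all: try (apply to_nat_inj, pair_inj in H2; destruct H2 as [H2 H3]).
  all: f_equal; auto.
Qed.

Section Completeness.
Variable Ax : form -> Prop.
Notation pv := (prv Ax).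

Lemma prv_refl a : pv (Imp a a).
Proof.
  eapply r_mp; [eapply r_mp; [apply (ax_S _ a (Imp a a) a) | apply ax_K] | apply (ax_K _ a a)].
Qed.

Lemma prv_dia_mono a b : pv (Imp a b) -> pv (Imp (Dia a) (Dia b)).
Proof. intro; eapply r_mp; [apply ax_Kdia | apply r_nec; auto]. Qed.

Lemma prv_box_mono a b : pv (Imp a b) -> pv (Imp (Box a) (Box b)).
Proof. intro; eapply r_mp; [apply ax_Kbox | apply r_nec; auto]. Qed.

(* Derivability from hypotheses X: modus ponens only, no necessitation of
   hypotheses. *)
Inductive ded (X : form -> Prop) : form -> Prop :=
| d_hyp a : X a -> ded X a
| d_thm a : pv a -> ded X a
| d_mp a b : ded X (Imp a b) -> ded X a -> ded X b.

Definition extend (X : form -> Prop) (a : form) : form -> Prop := fun x => X x \/ x = a.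

Lemma ded_mono (X Y : form -> Prop) a : (forall x, X x -> Y x) -> ded X a -> ded Y a.
Proof. intros H D; induction D; [apply d_hyp; auto | apply d_thm; auto | eapply d_mp; eauto]. Qed.

Lemma ded_prv_mp X a b : pv (Imp a b) -> ded X a -> ded X b.
Proof. intros; eapply d_mp; [apply d_thm; eauto | auto]. Qed.

Lemma ded_const X a b : ded X a -> ded X (Imp b a).
Proof. intro; eapply ded_prv_mp; [apply ax_K | auto]. Qed.

Lemma ded_refl X a : ded X (Imp a a).
Proof. apply d_thm, prv_refl. Qed.

Lemma deduction X a b : ded (extend X a) b -> ded X (Imp a b).
Proof.
  intro D; induction D as [c [Hc | Hc] | c Hc | c d D1 IH1 D2 IH2].
  - apply ded_const, d_hyp; auto.
  - subst; apply ded_refl.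
  - apply ded_const, d_thm; auto.
  - eapply d_mp; [eapply ded_prv_mp; [apply ax_S | exact IH1] | exact IH2].
Qed.

Lemma ded_weaken X a b : ded X b -> ded (extend X a) b.
Proof. apply ded_mono; unfold extend; auto. Qed.

Lemma ded_added X a : ded (extend X a) a.
Proof. apply d_hyp; unfold extend; auto. Qed.

Lemma ded_cut X a b : ded (extend X a) b -> ded X a -> ded X b.
Proof. intros H1 H2; eapply d_mp; [apply deduction; eauto | auto]. Qed.

Lemma ded_nil a : ded (fun _ => False) a -> pv a.
Proof. intro D; induction D; [contradiction | auto | eapply r_mp; eauto]. Qed.

Lemma ded_imp_trans X a b c : ded X (Imp a b) -> ded X (Imp b c) -> ded X (Imp a c).
Proof.
  intros H1 H2; apply deduction.
  eapply d_mp; [apply ded_weaken; eauto |].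
  eapply d_mp; [apply ded_weaken; eauto | apply ded_added].
Qed.

Lemma ded_or_elim X a b c : ded X (Imp a c) -> ded X (Imp b c) -> ded X (Imp (Or a b) c).
Proof. intros H1 H2; eapply d_mp; [eapply d_mp; [apply d_thm, ax_orE | eauto] | eauto]. Qed.

Lemma ded_and_intro X a b : ded X a -> ded X b -> ded X (And a b).
Proof. intros; eapply d_mp; [eapply ded_prv_mp; [apply ax_andI | eauto] | eauto]. Qed.

Lemma prv_and_intro a x y : pv (Imp a x) -> pv (Imp a y) -> pv (Imp a (And x y)).
Proof.
  intros H1 H2; apply ded_nil, deduction, ded_and_intro;
    (eapply d_mp; [apply ded_weaken, d_thm; eassumption | apply ded_added]).
Qed.

Definition theory (G : form -> Prop) := forall a, ded G a -> G a.
Definition prime (G : form -> Prop) := forall a b, G (Or a b) -> G a \/ G b.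

Definition unbox (G : form -> Prop) : form -> Prop := fun x => G (Box x).

Section TheoryFacts.
Variable G : form -> Prop.
Hypothesis TG : theory G.

Lemma theory_prv a : pv a -> G a.
Proof. intro H; apply TG, d_thm, H. Qed.

Lemma theory_mp a b : G (Imp a b) -> G a -> G b.
Proof. intros H1 H2; apply TG; eapply d_mp; apply d_hyp; eauto. Qed.

Lemma theory_prv_mp a b : pv (Imp a b) -> G a -> G b.
Proof. intros H1 H2; eapply theory_mp; [apply theory_prv, H1 | exact H2]. Qed.

Lemma theory_efq a : G Bot -> G a.
Proof. apply theory_prv_mp, ax_efq. Qed.

Lemma theory_top : G Top.
Proof. apply theory_prv, prv_refl. Qed.

Lemma theory_and_iff a b : G (And a b) <-> G a /\ G b.
Proof.
  split.
  - intro H; split; (eapply theory_prv_mp; [| exact H]); [apply ax_andE1 | apply ax_andE2].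
  - intros [H1 H2]; apply TG, ded_and_intro; apply d_hyp; auto.
Qed.

Lemma prime_or_iff a b : prime G -> (G (Or a b) <-> G a \/ G b).
Proof.
  intro PG; split; [apply PG |].
  intros [H | H]; (eapply theory_prv_mp; [| exact H]); [apply ax_orI1 | apply ax_orI2].
Qed.

Lemma theory_box_ded a : ded (unbox G) a -> G (Box a).
Proof.
  intro D; induction D as [c Hc | c Hc | c d D1 IH1 D2 IH2].
  - exact Hc.
  - apply theory_prv, r_nec; auto.
  - eapply theory_mp; [eapply theory_prv_mp; [apply ax_Kbox | eauto] | eauto].
Qed.
End TheoryFacts.

Lemma ded_conj_extract (Z Y : form -> Prop) (f : form -> form) :
  Y Top -> (forall a b, Y a -> Y b -> Y (And a b)) ->
  (forall a b, pv (Imp (f (And a b)) (f a))) -> (forall a b, pv (Imp (f (And a b)) (f b))) ->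
  forall z, ded (fun u => Z u \/ exists y, Y y /\ u = f y) z ->
  exists y, Y y /\ ded Z (Imp (f y) z).
Proof.
  intros HT HA H1 H2 z D.
  induction D as [c [Hc | [y [Hy Hc]]] | c Hc | c d D1 [y1 [Y1 IH1]] D2 [y2 [Y2 IH2]]].
  - exists Top; split; auto; apply ded_const, d_hyp; auto.
  - subst; exists y; split; auto; apply ded_refl.
  - exists Top; split; auto; apply ded_const, d_thm; auto.
  - exists (And y1 y2); split; auto. apply deduction.
    eapply d_mp.
    + eapply d_mp; [apply ded_weaken; exact IH1 | eapply ded_prv_mp; [apply H1 | apply ded_added]].
    + eapply d_mp; [apply ded_weaken; exact IH2 | eapply ded_prv_mp; [apply H2 | apply ded_added]].
Qed.

Section Lindenbaum.
Variables (X P : form -> Prop).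
Hypothesis P_or : forall a b, P a -> P b -> P (Or a b).
Hypothesis P_avoided : forall p, P p -> ~ ded X p.

Fixpoint stage (n : nat) : form -> Prop :=
  match n with
  | 0 => X
  | S n => fun x => stage n x \/
     (code x = n /\ forall p, P p -> ~ ded (extend (stage n) x) p)
  end.

Definition limit x := exists n, stage n x.

Lemma stage_avoids n p : P p -> ~ ded (stage n) p.
Proof.
  revert p; induction n; intros p Hp; simpl; [auto |].
  destruct (classic (exists x, code x = n /\ forall p, P p -> ~ ded (extend (stage n) x) p))
    as [[x [Hx1 Hx2]] | Hno].
  - intro D; apply (Hx2 p Hp); revert D; apply ded_mono.
    intros y [Hy | [Hy1 Hy2]]; [left; auto | right; apply code_inj; congruence].
  - intro D; apply (IHn p Hp); revert D; apply ded_mono.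
    intros y [Hy | [Hy1 Hy2]]; auto. exfalso; apply Hno; eauto.
Qed.

Lemma stage_mono n m x : n <= m -> stage n x -> stage m x.
Proof. induction 1; simpl; auto. Qed.

(* Derivations use finitely many hypotheses, hence live at a finite stage. *)
Lemma limit_compact a : ded limit a -> exists n, ded (stage n) a.
Proof.
  intro D; induction D as [c [n Hc] | c Hc | c d D1 [n1 IH1] D2 [n2 IH2]].
  - exists n; apply d_hyp; auto.
  - exists 0; apply d_thm; auto.
  - exists (max n1 n2); eapply d_mp; (eapply ded_mono; [| eauto]); intros;
      (eapply stage_mono; [| eassumption]; lia).
Qed.

Lemma limit_avoids p : P p -> ~ ded limit p.
Proof. intros Hp D; destruct (limit_compact _ D) as [n Dn]; exact (stage_avoids n p Hp Dn). Qed.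

Lemma limit_rejected a : ~ limit a -> exists p, P p /\ ded (extend (stage (code a)) a) p.
Proof.
  intro Hn. apply NNPP; intro H. apply Hn; exists (S (code a)); simpl; right; split; auto.
  intros p Hp D; apply H; eauto.
Qed.

Lemma rejected_limit a p : ded (extend (stage (code a)) a) p -> ded (extend limit a) p.
Proof. apply ded_mono; intros y [Hy | Hy]; [left; exists (code a) | right]; auto. Qed.

Lemma limit_theory : theory limit.
Proof.
  intros a D. apply NNPP; intro Hn. destruct (limit_rejected a Hn) as [p [Hp Dp]].
  apply (limit_avoids p Hp). eapply ded_cut; [apply rejected_limit, Dp | exact D].
Qed.

Lemma limit_prime : prime limit.
Proof.
  intros a b H. apply NNPP; intro Hn. apply not_or_and in Hn as [Ha Hb].
  destruct (limit_rejected a Ha) as [p1 [Hp1 D1]]; destruct (limit_rejected b Hb) as [p2 [Hp2 D2]].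
  apply (limit_avoids (Or p1 p2) (P_or _ _ Hp1 Hp2)).
  eapply d_mp; [| apply d_hyp; exact H].
  apply ded_or_elim; (eapply ded_imp_trans; [apply deduction, rejected_limit; eassumption |]);
    apply d_thm; [apply ax_orI1 | apply ax_orI2].
Qed.
End Lindenbaum.

Lemma lindenbaum (X P : form -> Prop) :
  (forall a b, P a -> P b -> P (Or a b)) -> (forall p, P p -> ~ ded X p) ->
  exists G, theory G /\ prime G /\ (forall x, X x -> G x) /\ (forall p, P p -> ~ G p).
Proof.
  intros H1 H2; exists (limit X P); repeat split.
  - apply limit_theory; auto.
  - apply limit_prime; auto.
  - intros x Hx; exists 0; exact Hx.
  - intros p Hp Hg; eapply limit_avoids; eauto; apply d_hyp; auto.
Qed.

Lemma lindenbaum_avoid (X : form -> Prop) b : ~ ded X b ->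
  exists G, theory G /\ prime G /\ (forall x, X x -> G x) /\ ~ G b /\ ~ G Bot.
Proof.
  intro Hb. destruct (lindenbaum X (fun p => ded X (Imp p b))) as [G [T [Pr [S Av]]]].
  - intros; apply ded_or_elim; auto.
  - intros p Hp Dp; apply Hb; eapply d_mp; eauto.
  - assert (Gb : ~ G b) by (apply Av, ded_refl).
    exists G; repeat split; auto. intro HB; apply Gb, (theory_efq G T), HB.
Qed.

(* A generic truth lemma: in a model whose worlds carry prime theories, with
   the intuitionistic order given by inclusion and every consistent prime
   theory realised, satisfaction coincides with membership as soon as the
   two modal clauses hold. *)
Section CanonicalTruth.
Variable M : model.
Variable th : W M -> form -> Prop.
Hypothesis th_theory : forall w, theory (th w).
Hypothesis th_prime : forall w, prime (th w).
Hypothesis le_th : forall w v, le M w v <-> (forall x, th w x -> th v x).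
Hypothesis Wbot_th : forall w, Wbot M w <-> th w Bot.
Hypothesis val_th : forall p w, val M p w <-> th w (Var p).
Hypothesis th_realised : forall G, theory G -> prime G -> ~ G Bot ->
  exists w, forall x, th w x <-> G x.
Hypothesis dia_th : forall w a,
  th w (Dia a) <-> (forall u, le M w u -> exists v, sq M u v /\ th v a).
Hypothesis box_th : forall w a,
  th w (Box a) <-> (forall u v, le M w u -> sq M u v -> th v a).

(* The implication clause, via prime extension of  th w ∪ {a}  avoiding b. *)
Lemma imp_th w a b : th w (Imp a b) <-> (forall v, le M w v -> th v a -> th v b).
Proof.
  split.
  - intros H v Hv Ha. apply (theory_mp _ (th_theory v) a); [apply le_th with w |]; auto.
  - intro H. apply NNPP; intro Hn.
    destruct (lindenbaum_avoid (extend (th w) a) b) as [G [TG [PG [Sub [Hb CG]]]]].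
    { intro D. apply Hn, th_theory, deduction, D. }
    destruct (th_realised G TG PG CG) as [u Hu].
    apply Hb, Hu, H.
    + apply le_th. intros x Hx. apply Hu, Sub. left; exact Hx.
    + apply Hu, Sub. right; reflexivity.
Qed.

Lemma canonical_truth f : forall w, sat M w f <-> th w f.
Proof.
  induction f as [p | | a IHa b IHb | a IHa b IHb | a IHa b IHb | a IHa | a IHa];
    intro w; simpl.
  - apply val_th.
  - apply Wbot_th.
  - rewrite IHa, IHb, theory_and_iff; [reflexivity | apply th_theory].
  - rewrite IHa, IHb, prime_or_iff; [reflexivity | apply th_theory | apply th_prime].
  - rewrite imp_th. setoid_rewrite IHa. setoid_rewrite IHb. reflexivity.
  - rewrite dia_th. setoid_rewrite IHa. reflexivity.
  - rewrite box_th. setoid_rewrite IHa. reflexivity.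
Qed.

Lemma canonical_completeness f : valid M f -> pv f.
Proof.
  intro H. apply NNPP; intro Hn.
  destruct (lindenbaum_avoid (fun _ => False) f) as [G [TG [PG [_ [Hf CG]]]]].
  { intro D; apply Hn, ded_nil, D. }
  destruct (th_realised G TG PG CG) as [w Hw].
  apply Hf, Hw, canonical_truth, H. rewrite Wbot_th, Hw; exact CG.
Qed.
End CanonicalTruth.

Record cs4_world := {
  cw_th : form -> Prop;
  cw_forbid : form -> Prop;
  cw_theory : theory cw_th;
  cw_prime : prime cw_th;
  cw_forbid_or : forall a b, cw_forbid a -> cw_forbid b -> cw_forbid (Or a b);
  cw_forbid_dia : forall s, cw_forbid s -> ~ cw_th (Dia s) }.

Definition cw_le (w v : cs4_world) := forall x, cw_th w x -> cw_th v x.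
Definition cw_sq (w v : cs4_world) :=
  (forall x, cw_th w (Box x) -> cw_th v x) /\ (forall x, cw_forbid w x -> cw_forbid v x).

Lemma cw_le_refl w : cw_le w w. Proof. intros x; auto. Qed.
Lemma cw_le_trans u v w : cw_le u v -> cw_le v w -> cw_le u w. Proof. intros H1 H2 x; auto. Qed.

Lemma cw_sq_refl w : cw_sq w w.
Proof. split; auto. intros x; apply theory_prv_mp, ax_Tbox; apply cw_theory. Qed.

Lemma cw_sq_trans u v w : cw_sq u v -> cw_sq v w -> cw_sq u w.
Proof.
  intros [H1 H2] [H3 H4]; split; auto. intros x H; apply H3, H1.
  eapply theory_prv_mp; [apply cw_theory | apply ax_4box | exact H].
Qed.

Lemma cw_bot_le w v : cw_th w Bot -> cw_le w v -> cw_th v Bot. Proof. auto. Qed.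

Lemma cw_bot_sq w v : cw_th w Bot -> cw_sq w v -> cw_th v Bot.
Proof. intros H1 [H2 _]; apply H2, (theory_efq _ (cw_theory w)), H1. Qed.

Definition cs4_frame : frame := {|
  W := cs4_world; Wbot := fun w => cw_th w Bot; le := cw_le; sq := cw_sq;
  le_refl := cw_le_refl; le_trans := cw_le_trans;
  sq_refl := cw_sq_refl; sq_trans := cw_sq_trans;
  Wbot_up_le := cw_bot_le; Wbot_up_sq := cw_bot_sq |}.

Lemma cw_val_up p (w v : cs4_world) : cw_th w (Var p) -> cw_le w v -> cw_th v (Var p).
Proof. auto. Qed.

Lemma cw_val_bot p (w : cs4_world) : cw_th w Bot -> cw_th w (Var p).
Proof. apply theory_efq, cw_theory. Qed.

Definition cs4_model : model := {|
  mframe := cs4_frame; val := fun p (w : W cs4_frame) => cw_th w (Var p);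
  val_up := cw_val_up; val_bot := cw_val_bot |}.

Definition cw_plain (G : form -> Prop) (TG : theory G) (PG : prime G) : cs4_world.
Proof. refine {| cw_th := G; cw_forbid := fun _ => False; cw_theory := TG; cw_prime := PG |}; tauto. Defined.

Lemma cw_dia_witness (u : cs4_world) a : cw_th u (Dia a) -> exists v, cw_sq u v /\ cw_th v a.
Proof.
  intro Hd. set (X := extend (unbox (cw_th u)) a).
  destruct (lindenbaum X (fun p => exists s, cw_forbid u s /\ ded X (Imp p (Dia s))))
    as [D [T [Pr [Sub Av]]]].
  - intros p q [s1 [H1 D1]] [s2 [H2 D2]]. exists (Or s1 s2); split; [apply cw_forbid_or; auto |].
    apply ded_or_elim; (eapply ded_imp_trans; [eassumption |]);
      apply d_thm, prv_dia_mono; [apply ax_orI1 | apply ax_orI2].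
  - intros p [s [Hs Ds]] Dp. apply (cw_forbid_dia u s Hs).
    assert (E : cw_th u (Box (Imp a (Dia s)))).
    { apply (theory_box_ded _ (cw_theory u)), deduction; eapply d_mp; eauto. }
    eapply theory_prv_mp; [apply cw_theory | apply ax_4dia |].
    eapply theory_mp; [apply cw_theory | | exact Hd].
    eapply theory_prv_mp; [apply cw_theory | apply ax_Kdia | exact E].
  - assert (ok : forall s, cw_forbid u s -> ~ D (Dia s)).
    { intros s Hs HD; apply (Av (Dia s)); auto. exists s; split; auto; apply ded_refl. }
    exists {| cw_th := D; cw_forbid := cw_forbid u; cw_theory := T; cw_prime := Pr;
              cw_forbid_or := cw_forbid_or u; cw_forbid_dia := ok |}.
    split; [split |]; simpl; auto.
    + intros x Hx; apply Sub; left; exact Hx.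
    + apply Sub; right; reflexivity.
Qed.

Lemma cw_dia_th (w : cs4_world) a :
  cw_th w (Dia a) <-> (forall u, cw_le w u -> exists v, cw_sq u v /\ cw_th v a).
Proof.
  split.
  - intros H u Hu. apply cw_dia_witness, Hu, H.
  - intro H. apply NNPP; intro Hn.
    (* forbid every formula implying a: the witness then refutes a *)
    assert (ok : forall s, pv (Imp s a) -> ~ cw_th w (Dia s)).
    { intros s Hs Hd; apply Hn.
      eapply theory_prv_mp; [apply cw_theory | apply prv_dia_mono; exact Hs | exact Hd]. }
    set (u := {| cw_th := cw_th w; cw_forbid := fun x => pv (Imp x a);
                 cw_theory := cw_theory w; cw_prime := cw_prime w;
                 cw_forbid_or := fun b c H1 H2 => r_mp _ _ _ (r_mp _ _ _ (ax_orE _ _ _ _) H1) H2;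
                 cw_forbid_dia := ok |}).
    destruct (H u (cw_le_refl w)) as [v [[_ Hv] Hva]].
    apply (cw_forbid_dia v a); [apply Hv, prv_refl |].
    eapply theory_prv_mp; [apply cw_theory | apply ax_Tdia | exact Hva].
Qed.

Lemma cw_box_th (w : cs4_world) a :
  cw_th w (Box a) <-> (forall u v, cw_le w u -> cw_sq u v -> cw_th v a).
Proof.
  split.
  - intros H u v Hu [Hv _]. apply Hv, Hu, H.
  - intro H. apply NNPP; intro Hn.
    destruct (lindenbaum_avoid (unbox (cw_th w)) a) as [G [T [Pr [Sub [Ha _]]]]].
    { intro D; apply Hn, (theory_box_ded _ (cw_theory w)), D. }
    apply Ha, (H (cw_plain (cw_th w) (cw_theory w) (cw_prime w)) (cw_plain G T Pr)).
    + intros x Hx; exact Hx.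
    + split; simpl; [exact Sub | tauto].
Qed.

(* A world can be stripped of its forbidden set, which yields backward
   confluence. *)
Lemma cs4_frame_backward : backward_confluent cs4_frame.
Proof.
  intros w v v' [H1 _] H2. exists (cw_plain (cw_th w) (cw_theory w) (cw_prime w)).
  split; [exact (cw_le_refl w) | split; simpl; [intros x Hx; apply H2, H1, Hx | contradiction]].
Qed.

Lemma cs4_completeness f : (forall M : model, CS4_frame M -> valid M f) -> pv f.
Proof.
  intro H. apply (canonical_completeness cs4_model cw_th); try (intros; reflexivity).
  - apply cw_theory.
  - apply cw_prime.
  - intros G T Pr _. exists (cw_plain G T Pr); reflexivity.
  - apply cw_dia_th.
  - apply cw_box_th.
  - apply H, cs4_frame_backward.
Qed.

Record cp_world := {
  cp_th : form -> Prop;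
  cp_theory : theory cp_th;
  cp_prime : prime cp_th;
  cp_consistent : ~ cp_th Bot }.

Definition cp_le (w v : cp_world) := forall x, cp_th w x -> cp_th v x.
Definition cp_box_sub (w v : cp_world) := forall x, cp_th w (Box x) -> cp_th v x.
Definition cp_sq (w v : cp_world) := cp_box_sub w v /\ (forall x, cp_th v x -> cp_th w (Dia x)).

Lemma cp_le_refl w : cp_le w w. Proof. intros x; auto. Qed.
Lemma cp_le_trans u v w : cp_le u v -> cp_le v w -> cp_le u w. Proof. intros H1 H2 x; auto. Qed.

Lemma cp_sq_refl w : cp_sq w w.
Proof. split; intros x; apply theory_prv_mp; try apply cp_theory; [apply ax_Tbox | apply ax_Tdia]. Qed.

Lemma cp_sq_trans u v w : cp_sq u v -> cp_sq v w -> cp_sq u w.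
Proof.
  intros [H1 H2] [H3 H4]; split.
  - intros x H; apply H3, H1. eapply theory_prv_mp; [apply cp_theory | apply ax_4box | exact H].
  - intros x H. eapply theory_prv_mp; [apply cp_theory | apply ax_4dia | apply H2, H4, H].
Qed.

Definition cp_frame : frame := {|
  W := cp_world; Wbot := fun _ => False; le := cp_le; sq := cp_sq;
  le_refl := cp_le_refl; le_trans := cp_le_trans;
  sq_refl := cp_sq_refl; sq_trans := cp_sq_trans;
  Wbot_up_le := fun _ _ H _ => H; Wbot_up_sq := fun _ _ H _ => H |}.

Lemma cp_val_up p (w v : cp_world) : cp_th w (Var p) -> cp_le w v -> cp_th v (Var p).
Proof. auto. Qed.

Definition cp_model : model := {|
  mframe := cp_frame; val := fun p (w : W cp_frame) => cp_th w (Var p);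
  val_up := cp_val_up; val_bot := fun p w (H : False) => match H with end |}.

Lemma cp_frame_infallible : infallible cp_frame.
Proof. intros w H; exact H. Qed.

Lemma cp_box_refuter (w : cp_world) a : ~ cp_th w (Box a) ->
  exists t, cp_box_sub w t /\ ~ cp_th t a.
Proof.
  intro Hn. destruct (lindenbaum_avoid (unbox (cp_th w)) a) as [D [TD [PD [Sub [Ha CD]]]]].
  { intro E; apply Hn, (theory_box_ded _ (cp_theory w)), E. }
  exists {| cp_th := D; cp_theory := TD; cp_prime := PD; cp_consistent := CD |}; auto.
Qed.

Lemma cp_completeness (P : frame -> Prop) : P cp_frame ->
  (forall w a, ~ cp_th w (Box a) -> exists u v, cp_le w u /\ cp_sq u v /\ ~ cp_th v a) ->
  (forall w a, cp_th w (Dia a) -> exists v, cp_sq w v /\ cp_th v a) ->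
  forall f, (forall M : model, P M -> valid M f) -> pv f.
Proof.
  intros HP box_refuted dia_witness f H.
  apply (canonical_completeness cp_model cp_th); try (intros; reflexivity).
  - apply cp_theory.
  - apply cp_prime.
  - intros w; split; [contradiction | apply cp_consistent].
  - intros G T Pr CG. exists {| cp_th := G; cp_theory := T; cp_prime := Pr; cp_consistent := CG |}.
    reflexivity.
  - intros w a; split.
    + intros Hd u Hu. apply dia_witness, Hu, Hd.
    + intro H'. destruct (H' w (cp_le_refl w)) as [v [[_ Hv] Ha]]. apply Hv, Ha.
  - intros w a; split.
    + intros Hb u v Hu [Hv _]. apply Hv, Hu, Hb.
    + intro H'. apply NNPP; intro Hn.
      destruct (box_refuted w a Hn) as [u [v [Hu [Huv Ha]]]]. exact (Ha (H' u v Hu Huv)).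
  - apply H, HP.
Qed.

Section DiamondProperties.
Hypothesis hDP : forall a b, Ax (Imp (Dia (Or a b)) (Or (Dia a) (Dia b))).
Hypothesis hN : Ax (Neg (Dia Bot)).

Lemma undia_bot (w : cp_world) : ~ cp_th w (Dia Bot).
Proof.
  intro H; apply (cp_consistent w).
  eapply theory_mp; [apply cp_theory | apply theory_prv; [apply cp_theory | apply ax_extra, hN] | exact H].
Qed.

Lemma undia_or (w : cp_world) z1 z2 :
  ~ cp_th w (Dia z1) -> ~ cp_th w (Dia z2) -> ~ cp_th w (Dia (Or z1 z2)).
Proof.
  intros H1 H2 H. apply (theory_prv_mp _ (cp_theory w) _ _ (ax_extra _ _ (hDP z1 z2))) in H.
  destruct (cp_prime w _ _ H); auto.
Qed.

Lemma cp_successor (w : cp_world) (Y : form -> Prop) :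
  Y Top -> (forall a b, Y a -> Y b -> Y (And a b)) -> (forall y, Y y -> cp_th w (Dia y)) ->
  exists v, cp_sq w v /\ forall y, Y y -> cp_th v y.
Proof.
  intros HT HA HY.
  set (X := fun u => unbox (cp_th w) u \/ exists y, Y y /\ u = y).
  destruct (lindenbaum X (fun p => exists z, ~ cp_th w (Dia z) /\ ded X (Imp p z)))
    as [D [TD [PD [Sub Av]]]].
  - intros p q [z1 [H1 D1]] [z2 [H2 D2]]. exists (Or z1 z2); split; [apply undia_or; auto |].
    apply ded_or_elim; (eapply ded_imp_trans; [eassumption |]);
      apply d_thm; [apply ax_orI1 | apply ax_orI2].
  - intros p [z [Hz Dz]] Dp. apply Hz.
    destruct (ded_conj_extract (unbox (cp_th w)) Y (fun x => x) HT HA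
      (fun a b => ax_andE1 _ a b) (fun a b => ax_andE2 _ a b) z (d_mp _ _ _ Dz Dp)) as [y [Hy Ey]].
    apply (theory_box_ded _ (cp_theory w)) in Ey.
    eapply theory_mp; [apply cp_theory | | apply HY, Hy].
    eapply theory_prv_mp; [apply cp_theory | apply ax_Kdia | exact Ey].
  - assert (CD : ~ D Bot).
    { intro HB; apply (Av Bot); auto. exists Bot; split; [apply undia_bot | apply ded_refl]. }
    exists {| cp_th := D; cp_theory := TD; cp_prime := PD; cp_consistent := CD |}.
    repeat split; simpl.
    + intros x Hx; apply Sub; left; exact Hx.
    + intros x Hx; apply NNPP; intro Hn; apply (Av x); auto. exists x; split; auto; apply ded_refl.
    + intros x Hx; apply Sub; right; exists x; auto.
Qed.

Lemma cp_dia_witness (w : cp_world) a : cp_th w (Dia a) -> exists v, cp_sq w v /\ cp_th v a.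
Proof.
  intro H. destruct (cp_successor w (fun x => pv (Imp a x))) as [v [Hv Ha]].
  - apply ded_nil, ded_const, ded_refl.
  - intros; apply prv_and_intro; auto.
  - intros x Hx; eapply theory_prv_mp; [apply cp_theory | apply prv_dia_mono, Hx | exact H].
  - exists v; split; auto. apply Ha, prv_refl.
Qed.

Lemma cp_frame_forward : forward_confluent cp_frame.
Proof.
  intros w w' v H1 [H2 H3].
  destruct (cp_successor w' (cp_th v)) as [v' [Hv' Sub]].
  - apply theory_top, cp_theory.
  - intros a b Ha Hb; apply theory_and_iff; [apply cp_theory | auto].
  - intros x Hx; apply H1, H3, Hx.
  - exists v'; split; auto.
Qed.

(* GS4: FS provides predecessors, whence the box clause and backward
   confluence; GD provides local linearity. *)
Section GS4Model.
Hypothesis hFS : forall a b, Ax (Imp (Imp (Dia a) (Box b)) (Box (Imp a b))).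
Hypothesis hGD : forall a b, Ax (Or (Imp a b) (Imp b a)).

Lemma cp_back_extension (w t : cp_world) : cp_box_sub w t -> exists w', cp_le w w' /\ cp_sq w' t.
Proof.
  intros HB.
  set (X := fun u => cp_th w u \/ exists y, cp_th t y /\ u = Dia y).
  destruct (lindenbaum X (fun p => exists y, ~ cp_th t y /\ ded X (Imp p (Box y))))
    as [D [TD [PD [Sub Av]]]].
  - intros p q [y1 [H1 D1]] [y2 [H2 D2]]. exists (Or y1 y2); split.
    + intro H; destruct (cp_prime t _ _ H); auto.
    + apply ded_or_elim; (eapply ded_imp_trans; [eassumption |]);
        apply d_thm, prv_box_mono; [apply ax_orI1 | apply ax_orI2].
  - intros p [y [Hy Dy]] Dp. apply Hy.
    destruct (ded_conj_extract (cp_th w) (cp_th t) Dia (theory_top _ (cp_theory t))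
      (fun a b Ha Hb => proj2 (theory_and_iff _ (cp_theory t) a b) (conj Ha Hb))
      (fun a b => prv_dia_mono _ _ (ax_andE1 _ a b)) (fun a b => prv_dia_mono _ _ (ax_andE2 _ a b))
      _ (d_mp _ _ _ Dy Dp)) as [x [Hx Ex]].
    apply (cp_theory w), (theory_prv_mp _ (cp_theory w) _ _ (ax_extra _ _ (hFS x y))), HB in Ex.
    eapply theory_mp; [apply cp_theory | exact Ex | exact Hx].
  - assert (CD : ~ D Bot).
    { intro HD; apply (Av Bot); auto. exists Bot; split; [apply cp_consistent | apply d_thm, ax_efq]. }
    exists {| cp_th := D; cp_theory := TD; cp_prime := PD; cp_consistent := CD |}.
    repeat split; simpl.
    + intros x Hx; apply Sub; left; exact Hx.
    + intros x Hx; apply NNPP; intro Hn; apply (Av (Box x)); auto.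
      exists x; split; auto; apply ded_refl.
    + intros x Hx; apply Sub; right; exists x; auto.
Qed.

Lemma gs4_box_refuted (w : cp_world) a : ~ cp_th w (Box a) ->
  exists u v, cp_le w u /\ cp_sq u v /\ ~ cp_th v a.
Proof.
  intro Hn. destruct (cp_box_refuter w a Hn) as [t [Ht Ha]].
  destruct (cp_back_extension w t Ht) as [u [Hu Hut]]. exists u, t; auto.
Qed.

(* Backward confluence: if  w ⊑ v ≼ v'  then the boxes of w hold in v'. *)
Lemma cp_frame_backward : backward_confluent cp_frame.
Proof.
  intros w v v' [H1 _] H2. apply cp_back_extension. intros x Hx; apply H2, H1, Hx.
Qed.

Lemma cp_frame_locally_linear : locally_linear cp_frame.
Proof.
  intros w u v H1 H2. apply NNPP; intro Hn. apply not_or_and in Hn as [Hn1 Hn2].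
  apply not_all_ex_not in Hn1 as [a Ha]. apply imply_to_and in Ha as [Ha1 Ha2].
  apply not_all_ex_not in Hn2 as [b Hb]. apply imply_to_and in Hb as [Hb1 Hb2].
  assert (Hw : cp_th w (Or (Imp a b) (Imp b a))) by (apply theory_prv; [apply cp_theory | apply ax_extra, hGD]).
  destruct (cp_prime w _ _ Hw) as [H | H].
  - apply Hb2. eapply theory_mp; [apply cp_theory | apply H1, H | exact Ha1].
  - apply Ha2. eapply theory_mp; [apply cp_theory | apply H2, H | exact Hb1].
Qed.

Lemma gs4_completeness f : (forall M : model, GS4_frame M -> valid M f) -> pv f.
Proof.
  apply (cp_completeness GS4_frame); [| exact gs4_box_refuted | exact cp_dia_witness].
  repeat split; [apply cp_frame_infallible | apply cp_frame_locally_linear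
                 | apply cp_frame_forward | apply cp_frame_backward].
Qed.
End GS4Model.

(* S4I: CD provides ⊑-successors below a given box-extension, whence the box
   clause and downward confluence. *)
Section S4IModel.
Hypothesis hCD : forall a b, Ax (Imp (Box (Or a b)) (Or (Box a) (Dia b))).

Lemma cp_down_extension (w t : cp_world) : cp_box_sub w t -> exists w', cp_sq w w' /\ cp_le w' t.
Proof.
  intros HB.
  set (X := unbox (cp_th w)).
  destruct (lindenbaum X (fun p => exists y z,
              ~ cp_th t y /\ ~ cp_th w (Dia z) /\ ded X (Imp p (Or y z))))
    as [D [TD [PD [Sub Av]]]].
  - intros p q [y1 [z1 [H1 [H2 D1]]]] [y2 [z2 [H3 [H4 D2]]]].
    exists (Or y1 y2), (Or z1 z2); split; [| split].
    + intro H; destruct (cp_prime t _ _ H); auto.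
    + apply undia_or; auto.
    + apply ded_or_elim; (eapply ded_imp_trans; [eassumption |]); apply ded_or_elim.
      * eapply ded_imp_trans; apply d_thm; apply ax_orI1.
      * eapply ded_imp_trans; apply d_thm; [apply ax_orI1 | apply ax_orI2].
      * eapply ded_imp_trans; apply d_thm; [apply ax_orI2 | apply ax_orI1].
      * eapply ded_imp_trans; apply d_thm; apply ax_orI2.
  - intros p [y [z [Hy [Hz Dy]]]] Dp.
    assert (E : cp_th w (Box (Or y z))) by (apply (theory_box_ded _ (cp_theory w)); eapply d_mp; eauto).
    apply (theory_prv_mp _ (cp_theory w) _ _ (ax_extra _ _ (hCD y z))) in E.
    destruct (cp_prime w _ _ E); auto.
  - assert (CD : ~ D Bot).
    { intro HD; apply (Av Bot); auto. exists Bot, Bot; repeat split; auto.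
      - apply cp_consistent.
      - apply undia_bot.
      - apply d_thm, ax_orI1. }
    exists {| cp_th := D; cp_theory := TD; cp_prime := PD; cp_consistent := CD |}.
    repeat split; simpl.
    + intros x Hx; apply Sub; exact Hx.
    + intros x Hx; apply NNPP; intro Hn; apply (Av x); auto.
      exists Bot, x; repeat split; auto; [apply cp_consistent | apply d_thm, ax_orI2].
    + intros x Hx; apply NNPP; intro Hn; apply (Av x); auto.
      exists x, Bot; repeat split; auto; [apply undia_bot | apply d_thm, ax_orI1].
Qed.

Lemma s4i_box_refuted (w : cp_world) a : ~ cp_th w (Box a) ->
  exists u v, cp_le w u /\ cp_sq u v /\ ~ cp_th v a.
Proof.
  intro Hn. destruct (cp_box_refuter w a Hn) as [t [Ht Ha]].
  destruct (cp_down_extension w t Ht) as [v [Hv Hvt]].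
  exists w, v; split; [apply cp_le_refl | split; [exact Hv | intro Hva; apply Ha, Hvt, Hva]].
Qed.

(* Downward confluence: if  w ≼ v ⊑ v'  then the boxes of w hold in v'. *)
Lemma cp_frame_downward : downward_confluent cp_frame.
Proof.
  intros w v v' H1 [H2 _]. apply cp_down_extension. intros x Hx; apply H2, H1, Hx.
Qed.

Lemma s4i_completeness f : (forall M : model, S4I_frame M -> valid M f) -> pv f.
Proof.
  apply (cp_completeness S4I_frame); [| exact s4i_box_refuted | exact cp_dia_witness].
  repeat split; [apply cp_frame_infallible | apply cp_frame_forward | apply cp_frame_downward].
Qed.
End S4IModel.
End DiamondProperties.
End Completeness.

Lemma GS4_DP a b : extra_axioms GS4 (Imp (Dia (Or a b)) (Or (Dia a) (Dia b))).
Proof. right; left; exists a, b; reflexivity. Qed.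
Lemma GS4_N : extra_axioms GS4 (Neg (Dia Bot)).
Proof. right; right; left; reflexivity. Qed.
Lemma GS4_FS a b : extra_axioms GS4 (Imp (Imp (Dia a) (Box b)) (Box (Imp a b))).
Proof. left; exists a, b; reflexivity. Qed.
Lemma GS4_GD a b : extra_axioms GS4 (Or (Imp a b) (Imp b a)).
Proof. right; right; right; exists a, b; reflexivity. Qed.
Lemma S4I_DP a b : extra_axioms S4I (Imp (Dia (Or a b)) (Or (Dia a) (Dia b))).
Proof. left; exists a, b; reflexivity. Qed.
Lemma S4I_N : extra_axioms S4I (Neg (Dia Bot)).
Proof. right; left; reflexivity. Qed.
Lemma S4I_CD a b : extra_axioms S4I (Imp (Box (Or a b)) (Or (Box a) (Dia b))).
Proof. right; right; exists a, b; reflexivity. Qed.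

Theorem mainTheorem4 :
  forall (L : logic) (phi : form),
    proves L phi <->
    (forall M : model, frame_class L (mframe M) -> valid M phi).
Proof.
  intros L phi; split.
  - intros D M HL w _. exact (proves_sound L M phi HL D w).
  - destruct L; intro H.
    + exact (cs4_completeness _ phi H).
    + exact (gs4_completeness _ GS4_DP GS4_N GS4_FS GS4_GD phi H).
    + exact (s4i_completeness _ S4I_DP S4I_N S4I_CD phi H).
Qed.
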